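(* Let $G$ be a simplicial group with $G_0=1$, let $\tilde G$ be its dummy, and let $p\colon\tilde G\to G$ be the simplicial homomorphism given in dimension $n$ by evaluation at $i_n=\mathrm{id}\colon[n]\to[n]\in B^n_n$. Then $p$ is surjective.
   Context: Let $B$ be the cosimplicial simplicial pointed set with $B^n_m$ the set of non-strictly increasing partial maps $b\colon[m]\dashrightarrow[n]$, marked element the map with empty domain; the simplicial structure in $m$ is by precomposition (domains pulled back) and the cosimplicial structure in $n$ by postcomposition. The dummy $\tilde G$ is the simplicial group with $\tilde G_n$ the group of base-point-preserving simplicial maps $B^n\to G$ (pointwise multiplication), structure homomorphisms induced by the cosimplicial structure of $B$. *)

From mathcomp Require Import all_boot.
Set Implicit Arguments. Unset Strict Implicit. Unset Printing Implicit Defensive.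

(* [n] = {0,...,n} is 'I_n.+1.  A map [m] -> [n] is a finite function. *)
Definition dmap (m n : nat) := {ffun 'I_m.+1 -> 'I_n.+1}.

Definition mono m n (f : dmap m n) : Prop :=
  forall i j : 'I_m.+1, i <= j -> f i <= f j.

Definition dcomp k m n (f : dmap m n) (g : dmap k m) : dmap k n :=
  [ffun i => f (g i)].

Definition did n : dmap n n := [ffun i => i].

Record sgroup := SGroup {
  sg_obj :> nat -> Type;
  sg_one : forall n, sg_obj n;
  sg_mul : forall n, sg_obj n -> sg_obj n -> sg_obj n;
  sg_inv : forall n, sg_obj n -> sg_obj n;
  sg_mulA : forall n (x y z : sg_obj n),
      sg_mul x (sg_mul y z) = sg_mul (sg_mul x y) z;
  sg_mul1 : forall n (x : sg_obj n), sg_mul (sg_one n) x = x;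
  sg_mulV : forall n (x : sg_obj n), sg_mul (sg_inv x) x = sg_one n;
  sg_act : forall m n, dmap m n -> sg_obj n -> sg_obj m;
  sg_act_id : forall n (x : sg_obj n), sg_act (did n) x = x;
  sg_act_comp : forall k m n (f : dmap m n) (g : dmap k m) (x : sg_obj n),
      mono f -> mono g -> sg_act (dcomp f g) x = sg_act g (sg_act f x);
  sg_act_mul : forall m n (f : dmap m n) (x y : sg_obj n),
      mono f -> sg_act f (sg_mul x y) = sg_mul (sg_act f x) (sg_act f y)
}.

(* B^n_m : partial maps [m] -/-> [n] (None = undefined), non-strictly
   increasing on their domain. *)
Definition pmap (n m : nat) := {ffun 'I_m.+1 -> option 'I_n.+1}.

Definition pmono n m (b : pmap n m) : Prop :=
  forall (i j : 'I_m.+1) (x y : 'I_n.+1),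
    i <= j -> b i = Some x -> b j = Some y -> x <= y.

Definition pprecomp n k m (b : pmap n m) (a : dmap k m) : pmap n k :=
  [ffun i => b (a i)].

Definition pempty n m : pmap n m := [ffun _ => None].

Definition pid n : pmap n n := [ffun i => Some i].

(* An element of the dummy  G~_n : a base-point-preserving simplicial map
   B^n -> G (values outside the pmono maps are irrelevant). *)
Record dummy (G : sgroup) (n : nat) := Dummy {
  dm_fun :> forall m, pmap n m -> G m;
  dm_nat : forall k m (a : dmap k m) (b : pmap n m),
      mono a -> pmono b -> dm_fun (pprecomp b a) = sg_act a (dm_fun b);
  dm_base : forall m, dm_fun (pempty n m) = sg_one G m
}.

Definition pev (G : sgroup) n (f : dummy G n) : G n := f n (pid n).

From Pilot Require Import Defs.
From mathcomp Require Import all_boot.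
From mathcomp Require Import zify.
Set Implicit Arguments. Unset Strict Implicit. Unset Printing Implicit Defensive.

(* For [b : B^n_m] and a level [1 <= j <= n], look at the set of [i] in [m]
   with [b i] defined and [j <= b i], bracketed by the sentinels "out" before
   [0] and "in" after [m].  Every change of membership along [0..m] is a jump
   [t], and records [i |-> #{levels whose jump t satisfies t <= i}], a map
   [m] -> [n] through which [g] is pulled back.  The preimage [f b] of [g] is
   the ordered product, nested over the levels, of these pullbacks, an
   entry-jump contributing the element and an exit-jump its inverse.
   - For [b] the identity, each level has the single jump [t = j], and the
     recorded map is the identity: [f (i_n) = g].
   - For [b] empty, each level jumps only at the sentinel [m + 1]; the recorded
     map is constant, hence factors through [G_0 = 1], and [f b = 1].
   - Precomposing with a monotone [a : [k] -> [m]] pulls the level sets back;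
     the jumps of [b] inside one fibre of [a] telescope to a single jump of
     [b o a] (or to nothing), which gives naturality. *)

Section SimplicialGroupFacts.
Variable G : sgroup.

Lemma sg_mulrV m (x : G m) : sg_mul x (sg_inv x) = sg_one G m.
Proof.
rewrite -[sg_mul x _](sg_mul1) -{1}(sg_mulV (sg_inv x)).
by rewrite -sg_mulA [sg_mul (sg_inv x) (sg_mul x _)]sg_mulA sg_mulV sg_mul1 sg_mulV.
Qed.

Lemma sg_mulr1 m (x : G m) : sg_mul x (sg_one G m) = x.
Proof. by rewrite -(sg_mulV x) sg_mulA sg_mulrV sg_mul1. Qed.

Lemma sg_act1 k m (a : dmap k m) : mono a -> sg_act a (sg_one G m) = sg_one G k.
Proof.
move=> ma; have e := sg_act_mul (sg_one G m) (sg_one G m) ma.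
rewrite sg_mul1 in e.
have := congr1 (sg_mul (sg_inv (sg_act a (sg_one G m)))) e.
by rewrite sg_mulA sg_mulV sg_mul1.
Qed.

Lemma sg_actV k m (a : dmap k m) (x : G m) : mono a ->
  sg_act a (sg_inv x) = sg_inv (sg_act a x).
Proof.
move=> ma; have e := sg_act_mul (sg_inv x) x ma.
rewrite sg_mulV sg_act1 // in e.
have := congr1 (fun y => sg_mul y (sg_inv (sg_act a x))) e.
by rewrite sg_mul1 -sg_mulA sg_mulrV sg_mulr1.
Qed.

Definition const_map m n (j : 'I_n.+1) : dmap m n := [ffun _ => j].

Lemma const_map_mono m n (j : 'I_n.+1) : mono (const_map m j).
Proof. by move=> i i' _; rewrite !ffunE. Qed.

Lemma sg_act_const_trivial m n (j : 'I_n.+1) (x : G n) :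
  (forall y : G 0, y = sg_one G 0) -> sg_act (const_map m j) x = sg_one G m.
Proof.
move=> G0_trivial.
have -> : const_map m j = dcomp (const_map 0 j) (const_map m ord0).
  by apply/ffunP => i; rewrite !ffunE.
rewrite sg_act_comp; try exact: const_map_mono.
by rewrite (G0_trivial (sg_act _ x)) sg_act1 //; apply: const_map_mono.
Qed.

(* The factor contributed by a step [p -> q] of an indicator sequence. *)
Definition sg_jump m (p q : bool) (x : G m) : G m :=
  if p then (if q then sg_one G m else sg_inv x) else (if q then x else sg_one G m).

Lemma sg_jump_trans m p q r (x : G m) :
  sg_mul (sg_jump p q x) (sg_jump q r x) = sg_jump p r x.
Proof.
by case: p; case: q; case: r => /=; rewrite ?sg_mul1 ?sg_mulr1 ?sg_mulV ?sg_mulrV.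
Qed.

Lemma sg_act_jump k m (a : dmap k m) p q (x : G m) : mono a ->
  sg_act a (sg_jump p q x) = sg_jump p q (sg_act a x).
Proof. by move=> ma; case: p; case: q => /=; rewrite ?sg_act1 ?sg_actV. Qed.

Fixpoint sg_prod m (f : nat -> G m) lo k : G m :=
  if k is k'.+1 then sg_mul (sg_prod f lo k') (f (lo + k')) else sg_one G m.

Lemma sg_prodD m (f : nat -> G m) lo k1 k2 :
  sg_prod f lo (k1 + k2) = sg_mul (sg_prod f lo k1) (sg_prod f (lo + k1) k2).
Proof.
elim: k2 => [|k IH] /=; first by rewrite addn0 sg_mulr1.
by rewrite addnS /= IH sg_mulA addnA.
Qed.

Lemma eq_sg_prod m (f f' : nat -> G m) lo k :
  (forall i, i < k -> f (lo + i) = f' (lo + i)) -> sg_prod f lo k = sg_prod f' lo k.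
Proof. by elim: k => [|k IH] eff' //=; rewrite IH ?eff' // => i /ltnW /eff'. Qed.

Lemma sg_act_prod k m (a : dmap k m) (f : nat -> G m) lo K : mono a ->
  sg_act a (sg_prod f lo K) = sg_prod (fun t => sg_act a (f t)) lo K.
Proof.
move=> ma; elim: K => [|K IH] /=; first exact: sg_act1.
by rewrite sg_act_mul // IH.
Qed.

Section Jumps.
Variables (m : nat) (E : nat -> bool).

Lemma sg_prod_jump_const (x : G m) lo k :
  sg_prod (fun t => sg_jump (E t) (E t.+1) x) lo k = sg_jump (E lo) (E (lo + k)) x.
Proof.
elim: k => [|k IH] /=; first by rewrite addn0; case: (E lo).
by rewrite IH sg_jump_trans addnS.
Qed.

Lemma sg_prod_jump_blocks (X Y : nat -> G m) (al : nat -> nat) K :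
  (forall s, s < K -> al s <= al s.+1) ->
  (forall s t, s < K -> al s <= t < al s.+1 -> X t = Y s) ->
  al 0 <= al K /\
  sg_prod (fun t => sg_jump (E t) (E t.+1) (X t)) (al 0) (al K - al 0) =
  sg_prod (fun s => sg_jump (E (al s)) (E (al s.+1)) (Y s)) 0 K.
Proof.
elim: K => [|K IH] al_mono XY; first by rewrite subnn.
have [al0K IHK] := IH (fun s sK => al_mono s (ltnW sK))
  (fun s t sK => XY s t (ltnW sK)).
have alKK := al_mono K (ltnSn K).
split; first exact: leq_trans al0K alKK.
have -> : al K.+1 - al 0 = (al K - al 0) + (al K.+1 - al K) by lia.
rewrite sg_prodD IHK /= subnKC // add0n; congr sg_mul.
rewrite (eq_sg_prod (f' := fun t => sg_jump (E t) (E t.+1) (Y K))).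
  by rewrite sg_prod_jump_const subnKC.
by move=> i iK; rewrite (XY K) //; apply/andP; split; lia.
Qed.

Lemma sg_prod_jump_single (f : nat -> G m) t0 N :
  (forall t, t <= N -> E t = (t0 < t)) ->
  sg_prod (fun t => sg_jump (E t) (E t.+1) (f t)) 0 N =
  if t0 < N then f t0 else sg_one G m.
Proof.
elim: N => [|N IH] Et //=.
rewrite IH => [|t tN]; last exact/Et/ltnW.
rewrite add0n !Et // ?leqnSn //.
case: (ltngtP t0 N) => [t0N|Nt0|<-]; last by rewrite ltnSn /= sg_mul1.
- by rewrite (_ : t0 < N.+1) /= ?sg_mulr1 //; lia.
- by rewrite (_ : t0 < N.+1 = false) /= ?sg_mul1 //; lia.
Qed.

End Jumps.

End SimplicialGroupFacts.

Arguments sg_prod : simpl never.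

Definition in_level n m (b : Defs.pmap n m) (j i : nat) : bool :=
  if b (inord i) is Some x then j <= x else false.

(* Position [s.+1] holds point [s] of [m]; positions [0] and [m.+2] are the
   sentinels "out" and "in".  So the factor [t] of a product of jumps compares
   the points [t - 1] and [t]. *)
Definition level_ind n m (b : Defs.pmap n m) j s :=
  if s is s'.+1 then (if s' <= m then in_level b j s' else true) else false.

Definition jump_map n m (ts : seq nat) : dmap m n :=
  [ffun i : 'I_m.+1 => inord (count (fun t => t <= i) ts)].

Lemma jump_map_mono n m ts : size ts <= n -> mono (jump_map n m ts).
Proof.
move=> ts_n i i' ii'; have cnt_lt c : count c ts < n.+1.
  by rewrite ltnS (leq_trans (count_size _ _)).
rewrite !ffunE !inordK //; apply: sub_count => t /= ti; exact: leq_trans ti ii'.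
Qed.

Lemma count_iota_le i l s : count (fun t => t <= i) (iota s l) = minn (i.+1 - s) l.
Proof.
elim: l s => [|l IH] s /=; first by rewrite minn0.
by rewrite IH; case: (leqP s i) => /=; lia.
Qed.

Lemma jump_map_iota n : jump_map n n (iota 1 n) = did n.
Proof.
apply/ffunP => i; rewrite !ffunE; apply: val_inj => /=.
rewrite count_iota_le inordK; have := ltn_ord i; lia.
Qed.

Lemma jump_map_nseq n m : jump_map n m (nseq n m.+1) = const_map m ord0.
Proof.
apply/ffunP => i; rewrite !ffunE; apply: val_inj => /=.
by rewrite count_nseq /= ltnNge -ltnS ltn_ord mul0n inordK.
Qed.

(* [dummy_prod g b r ts]: the product over the remaining [r] levels, the jumps
   of the first [size ts] levels being already chosen as [ts]. *)
Fixpoint dummy_prod (G : sgroup) n (g : G n) m (b : Defs.pmap n m) r ts : G m :=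
  if r is r'.+1 then
    let E := level_ind b (size ts).+1 in
    sg_prod (fun t => sg_jump (E t) (E t.+1) (dummy_prod g b r' (rcons ts t))) 0 m.+2
  else sg_act (jump_map n m ts) g.

(* [first_at a t] is [k.+1] when no [s] has [t <= a s]; for monotone [a] the
   jumps [t] with [first_at a t = s] form the interval
   [fibre_start a s <= t < fibre_start a s.+1]. *)
Definition first_at k m (a : dmap k m) (t : nat) :=
  find (fun s => t <= a (inord s)) (iota 0 k.+1).

Definition fibre_start k m (a : dmap k m) (s : nat) :=
  if s is s'.+1 then (if s' <= k then (a (inord s')).+1 else m.+2) else 0.

Section Reindexing.
Variables (k m : nat) (a : dmap k m).
Hypothesis a_mono : mono a.

Lemma first_at_le (i : 'I_k.+1) t : (first_at a t <= i) = (t <= a i).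
Proof.
apply/idP/idP => [ti | ].
  have ti_k : first_at a t < k.+1 by rewrite (leq_ltn_trans ti).
  have has_t : has (fun s => t <= a (inord s)) (iota 0 k.+1).
    by rewrite has_find size_iota.
  have := nth_find 0 has_t; rewrite nth_iota // add0n => /leq_trans; apply.
  by apply: a_mono; rewrite inordK.
move=> tai; rewrite leqNgt; apply/negP => it.
by have := before_find 0 it; rewrite nth_iota // add0n inord_val tai.
Qed.

Lemma first_at_size t : first_at a t <= k.+1.
Proof. by have := find_size (fun s => t <= a (inord s)) (iota 0 k.+1); rewrite size_iota. Qed.

Lemma fibre_start_mono s : s < k.+2 -> fibre_start a s <= fibre_start a s.+1.
Proof.
case: s => [|s] //= sk; rewrite (_ : s <= k) ?ltnS; last by lia.
case: ifP => [sk' | _]; first by apply: a_mono; rewrite !inordK //; lia.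
by have := ltn_ord (a (inord s)); lia.
Qed.

Lemma first_at_fibre s t : s < k.+2 ->
  fibre_start a s <= t < fibre_start a s.+1 -> first_at a t = s.
Proof.
move=> sk /andP [st ts]; apply/eqP; rewrite eqn_leq; apply/andP; split.
- case: s sk st ts => [|s] sk _ /=.
    by have := first_at_le (inord 0) t; rewrite inordK // => ->.
  case: ifP => [sk' ts | /negbT sk' _]; last by apply: leq_trans (first_at_size t) _; lia.
  by have := first_at_le (inord s.+1) t; rewrite inordK // => ->.
- case: s sk st ts => [|s] sk //=; rewrite (_ : s <= k) => [st _|]; last by lia.
  have := first_at_le (inord s) t; rewrite inordK; last by lia.
  by rewrite ltnNge => ->; rewrite -ltnNge.
Qed.

Lemma level_ind_fibre n (b : Defs.pmap n m) j s : s <= k.+2 ->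
  level_ind b j (fibre_start a s) = level_ind (pprecomp b a) j s.
Proof.
case: s => [|s] //= sk; case: ifP => _ /=; last by rewrite ltnn.
by rewrite -ltnS ltn_ord /in_level ffunE inord_val.
Qed.

Lemma fibre_start_last : fibre_start a k.+2 = m.+2.
Proof. by rewrite /= ltnn. Qed.

End Reindexing.

Lemma dummy_prod_nat (G : sgroup) n (g : G n) k m (a : dmap k m)
    (b : Defs.pmap n m) r ts :
  mono a -> size ts + r = n ->
  sg_act a (dummy_prod g b r ts) = dummy_prod g (pprecomp b a) r (map (first_at a) ts).
Proof.
move=> a_mono; elim: r ts => [|r IH] ts /= ts_r.
  rewrite -sg_act_comp //; last by apply: jump_map_mono; rewrite -ts_r addn0.
  congr sg_act; apply/ffunP => i; rewrite !ffunE /= count_map.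
  by congr inord; apply: eq_count => t /=; rewrite first_at_le.
set E := level_ind b (size ts).+1.
set Y := fun s => dummy_prod g (pprecomp b a) r (rcons (map (first_at a) ts) s).
rewrite sg_act_prod // (eq_sg_prod (f' := fun t =>
    sg_jump (E t) (E t.+1) (Y (first_at a t)))); last first.
  by move=> i _; rewrite sg_act_jump // IH ?map_rcons // size_rcons; lia.
have [_] := sg_prod_jump_blocks E (X := fun t => Y (first_at a t)) (Y := Y)
    (fibre_start_mono a_mono) (fun s t sk st => congr1 Y (first_at_fibre a_mono sk st)).
rewrite fibre_start_last [fibre_start a 0]/= subn0 => ->; rewrite size_map.
by apply: eq_sg_prod => s sk; rewrite add0n /E !level_ind_fibre // ltnW.
Qed.

Lemma dummy_prod_pempty (G : sgroup) n (g : G n) m r ts :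
  dummy_prod g (pempty n m) r ts = sg_act (jump_map n m (ts ++ nseq r m.+1)) g.
Proof.
elim: r ts => [|r IH] ts; first by rewrite cats0.
rewrite /= (@sg_prod_jump_single _ _ _ _ m.+1 m.+2) => [|[|t] tm] //=.
  by rewrite ltnSn IH cat_rcons.
case: ifP => tm'; last by rewrite ltnS; lia.
by rewrite /in_level ffunE ltnS; lia.
Qed.

Lemma dummy_prod_pid (G : sgroup) n (g : G n) r ts : size ts + r = n ->
  dummy_prod g (pid n) r ts = sg_act (jump_map n n (ts ++ iota (size ts).+1 r)) g.
Proof.
elim: r ts => [|r IH] ts ts_r; first by rewrite cats0.
rewrite /= (@sg_prod_jump_single _ _ _ _ (size ts).+1 n.+2) => [|[|t] tn] //=.
  rewrite (_ : (size ts).+1 < n.+2); last by lia.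
  by rewrite IH ?size_rcons ?cat_rcons //; lia.
case: ifP => tn'; last by lia.
by rewrite /in_level ffunE inordK //; lia.
Qed.

Theorem mainTheorem11 (G : sgroup) :
  (forall x : G 0, x = sg_one G 0) ->
  forall (n : nat) (g : G n), exists f : dummy G n, pev f = g.
Proof.
move=> G0_trivial n g.
pose f m (b : Defs.pmap n m) := dummy_prod g b n [::].
have f_nat k m (a : dmap k m) (b : Defs.pmap n m) :
    mono a -> pmono b -> f k (pprecomp b a) = sg_act a (f m b).
  by move=> a_mono _; rewrite /f (dummy_prod_nat g b a_mono).
have f_base m : f m (pempty n m) = sg_one G m.
  by rewrite /f dummy_prod_pempty jump_map_nseq sg_act_const_trivial.
exists (Dummy f_nat f_base).
by rewrite /pev /= /f dummy_prod_pid // jump_map_iota sg_act_id.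
Qed.
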